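(* Let $D\ge2$ be square-free, $K=\mathbb{Q}(\sqrt D)$ with ring of integers $\mathbb{Z}_K$, and let $u_D$ be defined as follows: fix the real embedding with $\sqrt D>0$, let $u_f$ be the fundamental unit of $K$ that is $>1$ under it, and set $u_D=u_f^2$ if $u_f$ has norm $-1$ and $u_D=u_f$ otherwise. For $r\ge1$ let $d_r=1+u_D^r+u_D^{-r}\in\mathbb{Z}$, and let $d_r'=d_r$ if $d_r$ is odd and $d_r'=2d_r$ if $d_r$ is even. Then the multiplicative order of $u_D$ in $(\mathbb{Z}_K/d_r'\mathbb{Z}_K)^\times$ is $3r\,\frac{d_r'}{d_r}$; that is, it is $3r$ if $d_r$ is odd and $6r$ if $d_r$ is even. *)

(* The real quadratic field Q(sqrt D) is realised inside a
   real closed field R (so sqrt D > 0: the chosen real embedding). *)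
From HB Require Import structures.
From mathcomp Require Import all_boot all_order all_algebra.
Set Implicit Arguments. Unset Strict Implicit. Unset Printing Implicit Defensive.
Import Order.TTheory GRing.Theory Num.Theory.
Local Open Scope ring_scope.

Definition squarefree (D : nat) : Prop :=
  forall m : nat, (1 < m)%N -> ~~ (m * m %| D)%N.

Section QuadField.
Variables (R : rcfType) (D : nat).

Definition sqD : R := Num.sqrt (D%:R).

Definition inK (x : R) : Prop :=
  exists p q : rat, x = ratr p + ratr q * sqD.

Definition alg_int (x : R) : Prop :=
  exists P : {poly int}, P \is monic /\ root (map_poly (intr : int -> R) P) x.

Definition inZK (x : R) : Prop := inK x /\ alg_int x.

Definition unitZK (x : R) : Prop := inZK x /\ x != 0 /\ inZK x^-1.

Definition normK_is (x : R) (n : rat) : Prop :=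
  exists p q : rat, x = ratr p + ratr q * sqD /\ p ^+ 2 - D%:R * q ^+ 2 = n.

Definition fundamental_unit (u : R) : Prop :=
  unitZK u /\ 1 < u /\
  forall v : R, unitZK v -> exists k : int, v = u ^ k \/ v = - u ^ k.

Definition is_uD (uD : R) : Prop :=
  exists uf : R, fundamental_unit uf /\
    ((normK_is uf (-1) /\ uD = uf ^+ 2) \/ (~ normK_is uf (-1) /\ uD = uf)).

(* x = y in Z_K / n Z_K  (for x, y in Z_K) *)
Definition congZK (n : int) (x y : R) : Prop := inZK ((x - y) / n%:~R).

Definition mod_order (x : R) (n : int) (k : nat) : Prop :=
  (0 < k)%N /\ congZK n (x ^+ k) 1 /\
  forall j : nat, (0 < j)%N -> (j < k)%N -> ~ congZK n (x ^+ j) 1.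

End QuadField.

(* Z_K = Z[omega], so every y in Z_K has a Galois conjugate y' with y y' in Z,
   and y / m in Z_K forces m ^ 2 to divide y y'; the conjugate of u = u_D is
   u^-1.  With W = u^r we have d = 1 + W + W^-1 and u^(3r) - 1 = d W (W - 1),
   so u^(3r) = 1 mod d, and u^(6r) = 1 mod 2d when d is even.  The exponents
   j with u^j = 1 mod n are closed under differences, so minimality reduces to
   two norm obstructions: for 0 < j <= 2r modulo d, and for j = 3r modulo 2d. *)

From HB Require Import structures.
From mathcomp Require Import all_boot all_order all_algebra.
From mathcomp Require Import ring lra zify.
Set Implicit Arguments. Unset Strict Implicit. Unset Printing Implicit Defensive.
Import Order.TTheory GRing.Theory Num.Theory.
Local Open Scope ring_scope.

Lemma unitz_of_mul_eq1 (l l' : int) : l * l' = 1 -> l = 1 \/ l = -1.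
Proof.
by rewrite mulrC => /intUnitRing.unitzPl; rewrite qualifE => /orP[] /eqP; [left|right].
Qed.

Lemma squarefree_int_of_sqr (D : nat) (s : rat) (K : int) :
  squarefree D -> D%:R * s ^+ 2 = K%:~R -> exists z : int, s = z%:~R.
Proof.
move=> sqf hs; exists (numq s).
have hc := denq_gt0 s.
set n := numq s in hs *; set c := denq s in hc hs *.
have se : s = n%:~R / c%:~R by rewrite divq_num_den.
have eqi : (D%:R * n ^+ 2 = K * c ^+ 2 :> int).
  apply: (@intr_inj rat); rewrite !rmorphM /=.
  by rewrite -hs se pmulrn intz; field; rewrite intr_eq0 gt_eqF.
have /(congr1 absz) := eqi; rewrite !abszM /= natz /= !mulnn => eqn.
have dvD : (`|c| ^ 2 %| D)%N.
  have cop : coprime (`|c| ^ 2) (`|n| ^ 2).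
    by rewrite coprimeXl // coprimeXr // coprime_sym coprime_num_den.
  by rewrite -(Gauss_dvdr _ cop) mulnC eqn dvdn_mull.
have c1 : c = 1.
  have : (`|c| <= 1)%N.
    by rewrite leqNgt; apply/negP => /sqf; rewrite mulnn dvD.
  by move: hc; lia.
by rewrite se c1 divr1.
Qed.

Local Notation pZtoQ := (map_poly (intr : int -> rat)).

Lemma monic_dvdp_int (m : {poly rat}) (P : {poly int}) :
  m \is monic -> P \is monic -> m %| pZtoQ P ->
  exists m1 : {poly int}, m = pZtoQ m1.
Proof.
move=> mm mP /dvdpP_rat_int [p1 [a a0 me] [q Pe]].
have l1 : lead_coef p1 * lead_coef p1 = 1.
  have : lead_coef p1 * lead_coef q = 1 by rewrite -lead_coefM -Pe; exact/eqP.
  by case/unitz_of_mul_eq1 => ->.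
have ha : a * (lead_coef p1)%:~R = 1.
  have := monicP mm; rewrite me lead_coefZ lead_coef_map_inj //.
  exact: intr_inj.
have ae : a = (lead_coef p1)%:~R.
  have -> : a = a * (lead_coef p1 * lead_coef p1)%:~R by rewrite l1 mulr1.
  by rewrite intrM mulrA ha mul1r.
by exists (lead_coef p1 *: p1); rewrite me ae map_polyZ.
Qed.

Section QuadraticIntegers.
Variables (R : rcfType) (D : nat).
Hypotheses (D2 : (2 <= D)%N) (sqf : squarefree D).
Local Notation s := (sqD R D).

Lemma sqD_sqr : s ^+ 2 = D%:R.
Proof. by rewrite /sqD sqr_sqrtr // ler0n. Qed.

Lemma sqD_rat_eq0 (a b : rat) : ratr a + ratr b * s = 0 -> a = 0 /\ b = 0.
Proof.
have [->|b0] := eqVneq b 0.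
  by rewrite rmorph0 mul0r addr0 => /eqP; rewrite fmorph_eq0 => /eqP.
move=> h; exfalso.
pose t := - a / b.
have st : s = ratr t.
  rewrite /t fmorph_div rmorphN /=; apply: (canRL (mulfK _)); first by rewrite fmorph_eq0.
  by apply/eqP; rewrite mulrC -subr_eq0 opprK addrC h.
have tD : t ^+ 2 = D%:R.
  by apply: (@fmorph_inj _ R ratr); rewrite rmorphXn /= -st sqD_sqr rmorph_nat.
have D0 : (D%:R : rat) != 0 by rewrite pnatr_eq0 -lt0n (leq_trans _ D2).
have [z tz] : exists z : int, t / D%:R = z%:~R.
  by apply: (@squarefree_int_of_sqr D _ 1 sqf); rewrite expr_div_n tD; field.
have : (D%:Z * z ^+ 2 = 1 :> int).
  by apply: (@intr_inj rat); rewrite rmorphM rmorphXn /= -tz expr_div_n tD -pmulrn; field.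
by move/unitz_of_mul_eq1 => []; lia.
Qed.

Lemma map_poly_ratr_intr (P : {poly int}) :
  map_poly (ratr : rat -> R) (pZtoQ P) = map_poly intr P.
Proof. by rewrite -map_poly_comp; apply: eq_map_poly => z /=; rewrite ratr_int. Qed.

Lemma alg_int_rat (p : rat) : alg_int (ratr p : R) -> exists z : int, p = z%:~R.
Proof.
move=> [P [mP hr]].
have : root (pZtoQ P) p.
  apply/eqP; apply: (@fmorph_inj _ R ratr).
  by rewrite -horner_map /= map_poly_ratr_intr rmorph0; exact/eqP.
rewrite root_factor_theorem => /(monic_dvdp_int (monicXsubC _) mP) [m1 hm].
exists (- m1`_0); have /eqP := congr1 (fun q : {poly rat} => q`_0) hm.
by rewrite /= coef_map /= coefB coefX coefC /= sub0r eqr_oppLR rmorphN => /eqP.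
Qed.

Lemma sqD_minpoly_dvdp (p q : rat) (P : {poly rat}) : q != 0 ->
  root (map_poly ratr P) (ratr p + ratr q * s) ->
  ('X - p%:P) ^+ 2 - (D%:R * q ^+ 2)%:P %| P.
Proof.
set x := ratr p + ratr q * s; set m := _ - _ => q0 hr.
have sm : size m = 3.
  rewrite /m size_polyDl ?size_exp_XsubC //.
  by rewrite size_polyN (leq_ltn_trans (size_polyC_leq1 _)).
have mx : (map_poly ratr m).[x] = 0.
  rewrite /m rmorphB /= rmorphXn /= rmorphB /= map_polyX !map_polyC /=.
  by rewrite !hornerE /x addrAC subrr add0r !rmorphM /= rmorph_nat exprMn sqD_sqr; ring.
apply/modp_eq0P; set rho := _ %% m.
have sz : (size rho <= 2)%N.
  by have := @ltn_modpN0 _ P m; rewrite sm; apply; rewrite -size_poly_eq0 sm.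
have hx : (map_poly ratr rho).[x] = 0.
  have := congr1 (fun t => (map_poly ratr t).[x]) (divp_eq P m).
  rewrite /= rmorphD rmorphM /= hornerD hornerM mx mulr0 add0r -/rho => <-.
  exact/eqP.
have {hx} : ratr (rho`_0 + rho`_1 * p) + ratr (rho`_1 * q) * s = 0 :> R.
  rewrite -{}hx (@horner_coef_wide _ 2) ?size_map_poly //.
  rewrite !big_ord_recl big_ord0 !coef_map /= expr0 mulr1 expr1 addr0 /x.
  by rewrite rmorphD !rmorphM /=; ring.
move=> /sqD_rat_eq0 [h0 /eqP]; rewrite mulf_eq0 (negPf q0) orbF => /eqP h1.
rewrite h1 mul0r addr0 in h0.
apply/polyP => i; rewrite coef0.
by case: i => [|[|i]] //; rewrite nth_default //; exact: leq_trans sz _.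
Qed.

Lemma alg_int_sqD (p q : rat) : alg_int (ratr p + ratr q * s) ->
  exists M N : int, 2 * p = M%:~R /\ p ^+ 2 - D%:R * q ^+ 2 = N%:~R.
Proof.
have [->|q0] := eqVneq q 0.
  rewrite rmorph0 mul0r addr0 => /alg_int_rat [z ->].
  by exists (2 * z), (z ^+ 2); rewrite rmorphM expr0n /= mulr0 subr0 rmorphXn.
move=> [P [mP hr]].
have mm : ('X - p%:P) ^+ 2 - (D%:R * q ^+ 2)%:P \is monic.
  rewrite monicE lead_coefDl ?(monicP (monic_exp _ (monicXsubC _))) //.
  by rewrite size_polyN (leq_ltn_trans (size_polyC_leq1 _)) // size_exp_XsubC.
have [|m1 hm] := monic_dvdp_int mm mP.
  by apply: sqD_minpoly_dvdp; rewrite // map_poly_ratr_intr.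
exists (- m1`_1), (m1`_0); split.
  have := congr1 (fun q : {poly rat} => q`_1) hm.
  rewrite /= coef_map /= coefB coefC /= subr0 sqrrB !coefE /= rmorphN /= => <-.
  by rewrite mulr2n; ring.
have := congr1 (fun q : {poly rat} => q`_0) hm.
by rewrite /= coef_map /= coefB coefC /= sqrrB !coefE /= => <-; rewrite mulr0n; ring.
Qed.

End QuadraticIntegers.

Lemma parity_of_norm4_D1 (D : nat) (M n N : int) : (D %% 4 = 1)%N ->
  M ^+ 2 - D%:Z * n ^+ 2 = 4 * N -> exists k, M - n = 2 * k.
Proof.
move=> hD; rewrite (divn_eq D 4) hD (divz_eq M 2) (divz_eq n 2) !expr2.
have : 0 <= (M %% 2)%Z < 2 by rewrite modz_ge0 // ltz_pmod.
have : 0 <= (n %% 2)%Z < 2 by rewrite modz_ge0 // ltz_pmod.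
move: (M %/ 2)%Z (M %% 2)%Z (n %/ 2)%Z (n %% 2)%Z => a e b f f01 e01.
have [-> | ->] : e = 0 \/ e = 1 by lia.
all: have [-> | ->] : f = 0 \/ f = 1 by lia.
all: move=> h; try lia.
all: by exists (a - b); lia.
Qed.

Lemma parity_of_norm4_D23 (D : nat) (M n N : int) : (D %% 4 = 2 \/ D %% 4 = 3)%N ->
  M ^+ 2 - D%:Z * n ^+ 2 = 4 * N -> exists k l, M = 2 * k /\ n = 2 * l.
Proof.
move=> hD; rewrite (divn_eq D 4) (divz_eq M 2) (divz_eq n 2) !expr2.
have : 0 <= (M %% 2)%Z < 2 by rewrite modz_ge0 // ltz_pmod.
have : 0 <= (n %% 2)%Z < 2 by rewrite modz_ge0 // ltz_pmod.
move: (M %/ 2)%Z (M %% 2)%Z (n %/ 2)%Z (n %% 2)%Z => a e b f f01 e01.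
have [-> | ->] : e = 0 \/ e = 1 by lia.
all: have [-> | ->] : f = 0 \/ f = 1 by lia.
all: case: hD => -> h; try lia.
all: by exists a, b; lia.
Qed.

Section IntegralBasis.
Variables (R : rcfType) (D : nat).
Hypotheses (D2 : (2 <= D)%N) (sqf : squarefree D).
Local Notation s := (sqD R D).

Definition D1mod4 := (D %% 4 == 1)%N.
Definition omega : R := if D1mod4 then (1 + s) / 2 else s.
Definition omegac : R := if D1mod4 then (1 - s) / 2 else - s.
Definition omega_trace : int := if D1mod4 then 1 else 0.
Definition omega_norm : int := if D1mod4 then - (D %/ 4)%:Z else - D%:Z.

Lemma natr_D_D1mod4 : D1mod4 -> (D%:R : R) = (D %/ 4)%:R * 4 + 1.
Proof. by move/eqP=> h; rewrite {1}(divn_eq D 4) h natrD natrM. Qed.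

Lemma omega_add_conj : omega + omegac = omega_trace%:~R.
Proof. by rewrite /omegac /omega /omega_trace; case: D1mod4; [field | rewrite subrr]. Qed.

Lemma omega_sqr : omega ^+ 2 = omega_trace%:~R * omega - omega_norm%:~R.
Proof.
rewrite /omega /omega_trace /omega_norm; case hb: D1mod4; rewrite rmorphN opprK /=.
  transitivity ((1 + 2 * s + s ^+ 2) / 4); first by field.
  by rewrite sqD_sqr (natr_D_D1mod4 hb) -pmulrn; field.
by rewrite sqD_sqr mul0r add0r -pmulrn.
Qed.

Lemma omegac_sqr : omegac ^+ 2 = omega_trace%:~R * omegac - omega_norm%:~R.
Proof.
have -> : omegac = omega_trace%:~R - omega by rewrite -omega_add_conj; ring.
by rewrite sqrrB omega_sqr; ring.
Qed.

Lemma omega_mul_conj : omega * omegac = omega_norm%:~R.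
Proof.
have -> : omegac = omega_trace%:~R - omega by rewrite -omega_add_conj; ring.
by rewrite mulrBr -expr2 omega_sqr; ring.
Qed.

Lemma omega_sqD : exists p q : rat,
  q != 0 /\ omega = ratr p + ratr q * s /\ omegac = ratr p - ratr q * s.
Proof.
rewrite /omega /omegac; case: D1mod4.
  by exists (1 / 2), (1 / 2); rewrite fmorph_div rmorph1 rmorph_nat; split=> //; split; field.
by exists 0, 1; rewrite rmorph0 rmorph1 add0r sub0r mul1r oner_eq0.
Qed.

(* [conjZK y y'] : y lies in Z[omega] = Z_K and y' is its Galois conjugate. *)
Definition conjZK (y y' : R) := exists a b : int,
  y = a%:~R + b%:~R * omega /\ y' = a%:~R + b%:~R * omegac.

Lemma conjZK_int (z : int) : conjZK z%:~R z%:~R.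
Proof. by exists z, 0; rewrite !mul0r !addr0. Qed.

Lemma conjZK1 : conjZK 1 1.
Proof. by have := conjZK_int 1; rewrite rmorph1. Qed.

Lemma conjZK_add y y' z z' : conjZK y y' -> conjZK z z' -> conjZK (y + z) (y' + z').
Proof.
move=> [a [b [-> ->]]] [a' [b' [-> ->]]].
by exists (a + a'), (b + b'); rewrite !rmorphD /=; split; ring.
Qed.

Lemma conjZK_opp y y' : conjZK y y' -> conjZK (- y) (- y').
Proof. by move=> [a [b [-> ->]]]; exists (- a), (- b); rewrite !rmorphN /=; split; ring. Qed.

Lemma conjZK_sub y y' z z' : conjZK y y' -> conjZK z z' -> conjZK (y - z) (y' - z').
Proof. by move=> yy' /conjZK_opp; apply: conjZK_add. Qed.

Lemma conjZK_mul y y' z z' : conjZK y y' -> conjZK z z' -> conjZK (y * z) (y' * z').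
Proof.
move=> [a [b [-> ->]]] [a' [b' [-> ->]]].
exists (a * a' - b * b' * omega_norm), (a * b' + b * a' + b * b' * omega_trace).
rewrite !rmorphD !rmorphM /=; split.
  transitivity (a%:~R * a'%:~R + (a%:~R * b'%:~R + b%:~R * a'%:~R) * omega
                + b%:~R * b'%:~R * omega ^+ 2 : R); first by ring.
  by rewrite omega_sqr; ring.
transitivity (a%:~R * a'%:~R + (a%:~R * b'%:~R + b%:~R * a'%:~R) * omegac
              + b%:~R * b'%:~R * omegac ^+ 2 : R); first by ring.
by rewrite omegac_sqr; ring.
Qed.

Lemma conjZK_sym y y' : conjZK y y' -> conjZK y' y.
Proof.
move=> [a [b [-> ->]]]; exists (a + b * omega_trace), (- b).
by rewrite rmorphD rmorphM rmorphN /= -omega_add_conj; split; ring.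
Qed.

Lemma conjZK_sqD y y' : conjZK y y' ->
  exists p q : rat, y = ratr p + ratr q * s /\ y' = ratr p - ratr q * s.
Proof.
have [p [q [_ [ew ewc]]]] := omega_sqD.
move=> [a [b [-> ->]]]; exists (a%:~R + b%:~R * p), (b%:~R * q).
by rewrite ew ewc rmorphD !rmorphM /= !ratr_int; split; ring.
Qed.

Lemma conjZK_uniq y y1 y2 : conjZK y y1 -> conjZK y y2 -> y1 = y2.
Proof.
move=> /conjZK_sqD [p [q [-> ->]]] /conjZK_sqD [p' [q' [/eqP e ->]]].
move: e; rewrite -subr_eq0 => /eqP e.
have /sqD_rat_eq0 [] // : ratr (p - p') + ratr (q - q') * s = 0 :> R.
  by rewrite -e !rmorphB /=; ring.
by move=> /eqP; rewrite subr_eq0 => /eqP -> /eqP; rewrite subr_eq0 => /eqP ->.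
Qed.

Lemma conjZK_norm y y' : conjZK y y' -> exists n : int, y * y' = n%:~R.
Proof.
move=> [a [b [-> ->]]].
exists (a ^+ 2 + a * b * omega_trace + b ^+ 2 * omega_norm).
transitivity (a%:~R ^+ 2 + a%:~R * b%:~R * (omega + omegac)
              + b%:~R ^+ 2 * (omega * omegac) : R); first by ring.
by rewrite omega_add_conj omega_mul_conj !(rmorphD, rmorphM, rmorphXn) /=; ring.
Qed.

Lemma conjZK_inZK y y' : conjZK y y' -> inZK D y.
Proof.
move=> yy'; split.
  by have [p [q [-> _]]] := conjZK_sqD yy'; exists p, q.
have [n en] := conjZK_norm yy'.
have [t et] : exists t : int, y + y' = t%:~R.
  case: yy' en => [a [b [-> ->]]] _; exists (2 * a + b * omega_trace).
  by rewrite rmorphD !rmorphM /= -omega_add_conj; ring.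
exists (('X - t%:P) * 'X + n%:P); split.
  rewrite monicE lead_coefDl ?lead_coefMX ?lead_coefXsubC //.
  rewrite size_mulX ?size_XsubC; last exact: monic_neq0 (monicXsubC _).
  exact: leq_ltn_trans (size_polyC_leq1 _) _.
rewrite /root rmorphD rmorphM /= rmorphB /= map_polyX !map_polyC !hornerE /=.
by rewrite -en -et; apply/eqP; ring.
Qed.

Lemma alg_int_sqD_halves (p q : rat) : alg_int (ratr p + ratr q * s) ->
  exists M n N : int,
    [/\ 2 * p = M%:~R, 2 * q = n%:~R & M ^+ 2 - D%:Z * n ^+ 2 = 4 * N].
Proof.
move=> /(alg_int_sqD D2 sqf) [M [N [eM eN]]].
have [n en] : exists n : int, 2 * q = n%:~R.
  apply: (@squarefree_int_of_sqr D _ (M ^+ 2 - 4 * N) sqf).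
  by rewrite !(rmorphD, rmorphN, rmorphM, rmorphXn) /= -eM -eN; ring.
exists M, n, N; split => //.
apply: (@intr_inj rat); rewrite !(rmorphD, rmorphN, rmorphM, rmorphXn) /= -en -eM.
by rewrite !rmorph1 -eN -pmulrn; ring.
Qed.

Lemma inZK_conjZK y : inZK D y -> exists y', conjZK y y'.
Proof.
move=> [[p [q ->]] /alg_int_sqD_halves [M [n [N [eM en hi]]]]].
have ratr_half (t : rat) (z : int) : 2 * t = z%:~R -> ratr t = z%:~R / 2 :> R.
  by move=> /(congr1 (ratr : rat -> R)); rewrite rmorphM /= rmorph_nat ratr_int => <-; field.
rewrite (ratr_half _ _ eM) (ratr_half _ _ en).
case hb : D1mod4.
  have [k ek] := parity_of_norm4_D1 (eqP hb) hi.
  exists (k%:~R + n%:~R * omegac), k, n; split => //.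
  have -> : M = 2 * k + n by lia.
  by rewrite /omega hb rmorphD rmorphM /= rmorph_nat; field.
have hD : (D %% 4 = 2 \/ D %% 4 = 3)%N.
  have : (D %% 4 != 0)%N.
    by apply: contraNneq (sqf (isT : (1 < 2)%N)) => h0; rewrite (divn_eq D 4) h0 addn0 dvdn_mull.
  by move: hb; rewrite /D1mod4; have := ltn_pmod D (isT : (0 < 4)%N); lia.
have [k [l [-> ->]]] := parity_of_norm4_D23 hD hi.
exists (k%:~R + l%:~R * omegac), k, l; split => //.
by rewrite /omega hb !rmorphM /= rmorph_nat; field.
Qed.

Lemma inZK_mul (x y : R) : inZK D x -> inZK D y -> inZK D (x * y).
Proof.
move=> /inZK_conjZK [x' xx'] /inZK_conjZK [y' yy'].
exact: conjZK_inZK (conjZK_mul xx' yy').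
Qed.

Lemma inZK_sub (x y : R) : inZK D x -> inZK D y -> inZK D (x - y).
Proof.
move=> /inZK_conjZK [x' xx'] /inZK_conjZK [y' yy'].
exact: conjZK_inZK (conjZK_sub xx' yy').
Qed.

Lemma congZK_dvd (m n : int) (x y : R) : m != 0 -> congZK D (m * n) x y -> congZK D n x y.
Proof.
move=> m0 h; rewrite /congZK.
have -> : (x - y) / n%:~R = m%:~R * ((x - y) / (m * n)%:~R).
  by rewrite intrM invfM mulrCA !mulrA mulfK ?intr_eq0.
exact: inZK_mul (conjZK_inZK (conjZK_int m)) h.
Qed.

Lemma inZK_div_norm (m : int) y y' : m != 0 -> conjZK y y' -> inZK D (y / m%:~R) ->
  exists k : int, y * y' = k%:~R * m%:~R ^+ 2.
Proof.
move=> m0 yy' /inZK_conjZK [z yz].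
have m0R : m%:~R != 0 :> R by rewrite intr_eq0.
have -> : y' = z * m%:~R.
  by apply: conjZK_uniq yy' _; have := conjZK_mul yz (conjZK_int m); rewrite divfK.
have [k ek] := conjZK_norm yz.
by exists k; rewrite -ek; field.
Qed.

Lemma is_uD_conjZK (uD : R) : is_uD D uD -> conjZK uD uD^-1 /\ 1 < uD.
Proof.
move=> [uf [[[ufZ [uf0 ufVZ]] [uf1 _]] huD]].
have [w hw] := inZK_conjZK ufZ.
have [w' hw'] := inZK_conjZK ufVZ.
have [n en] := conjZK_norm hw.
have [n' en'] := conjZK_norm hw'.
have ww' : w * w' = 1.
  by have := conjZK_uniq (conjZK_mul hw hw'); rewrite mulfV //; apply; exact: conjZK1.
have /unitz_of_mul_eq1 n1 : n * n' = 1.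
  apply: (@intr_inj R); rewrite rmorphM /= -en -en' rmorph1.
  transitivity ((uf * uf^-1) * (w * w')); first by ring.
  by rewrite ww' mulfV // mulr1.
have ew : w = n%:~R / uf by rewrite -en mulrC mulKf.
case: huD => [[_ ->] | [nN ->]].
  split; last by rewrite expr2; nra.
  have := conjZK_mul hw hw; congr conjZK; rewrite ew.
  by case: n1 => ->; rewrite ?rmorphN rmorph1; field.
split => //; case: n1 ew en => -> ew en; first by rewrite ew rmorph1 mul1r in hw.
exfalso; apply: nN.
have [p [q [euf ew']]] := conjZK_sqD hw.
exists p, q; split => //.
apply: (@fmorph_inj _ R ratr).
rewrite !(rmorphB, rmorphM, rmorphXn, rmorphN) /= rmorph_nat rmorph1 -sqD_sqr.
by rewrite rmorphN rmorph1 /= in en; rewrite -en euf ew'; ring.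
Qed.

End IntegralBasis.

Arguments conjZK_int {R D} z.
Arguments conjZK1 {R D}.

Section AddInv.
Variable R : rcfType.

Lemma ler_add_inv (x w : R) : 1 <= x -> x <= w -> x + x^-1 <= w + w^-1.
Proof.
move=> x1 xw.
have -> : w + w^-1 = x + x^-1 + (w - x) * (x * w - 1) / (x * w) by field; lra.
by rewrite lerDl divr_ge0 ?mulr_ge0 //; nra.
Qed.

Lemma add_inv_gt2 (x : R) : 1 < x -> 2 < x + x^-1.
Proof.
move=> x1; have -> : x + x^-1 = 2 + (x - 1) ^+ 2 / x by field; lra.
by rewrite ltrDl divr_gt0 ?exprn_gt0 //; lra.
Qed.

End AddInv.

Section UnitOrder.
Variables (R : rcfType) (D : nat) (u : R) (r : nat) (d : int).
Hypotheses (D2 : (2 <= D)%N) (sqf : squarefree D).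
Hypotheses (hu : conjZK D u u^-1) (u1 : 1 < u) (r1 : (1 <= r)%N)
  (hd : d%:~R = 1 + u ^+ r + u ^- r).
Local Notation dR := (d%:~R : R).
Local Notation W := (u ^+ r).
Local Notation conjZK := (@conjZK R D).
Local Notation congZK := (@congZK R D).

Lemma unit_neq0 : u != 0.
Proof. by rewrite gt_eqF // (lt_trans ltr01 u1). Qed.

Lemma conjZK_expu k : conjZK (u ^+ k) (u ^- k).
Proof.
elim: k => [|k IH]; first by rewrite expr0 invr1; exact: conjZK1.
by rewrite exprS invfM; apply: conjZK_mul.
Qed.

Lemma expu_mulV k : u ^+ k * u ^- k = 1.
Proof. by rewrite mulfV // expf_neq0 // unit_neq0. Qed.

Lemma congZK_expuB (n : int) a b : (b <= a)%N ->
  congZK n (u ^+ a) 1 -> congZK n (u ^+ b) 1 -> congZK n (u ^+ (a - b)) 1.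
Proof.
move=> ba ha hb.
have := inZK_mul D2 sqf (conjZK_inZK (conjZK_sym (conjZK_expu b))) (inZK_sub D2 sqf ha hb).
congr inZK; rewrite -{1}(subnK ba) exprD.
transitivity (u ^+ (a - b) * (u ^+ b * u ^- b) / n%:~R - (u ^+ b * u ^- b) / n%:~R); first by ring.
by rewrite expu_mulV; ring.
Qed.

Lemma dR_gt3 : 3 < dR.
Proof.
by rewrite hd; have := @add_inv_gt2 _ W; rewrite exprn_egt1 -?lt0n // => /(_ r1); lra.
Qed.

Lemma dR_neq0 : dR != 0.
Proof. by apply: lt0r_neq0; have := dR_gt3; lra. Qed.

Lemma expu3r : u ^+ (3 * r) - 1 = dR * (W * (W - 1)).
Proof.
rewrite hd mulnC exprM.
transitivity (W ^+ 3 - 1 + (W * W^-1 - 1) * (W - 1)); last by ring.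
by rewrite expu_mulV subrr mul0r addr0.
Qed.

Lemma conjZK_expu3r_div : conjZK (W * (W - 1)) (W^-1 * (W^-1 - 1)).
Proof. exact: conjZK_mul (conjZK_expu r) (conjZK_sub (conjZK_expu r) conjZK1). Qed.

Lemma congZK_expu3r : congZK d (u ^+ (3 * r)) 1.
Proof.
rewrite /congZK expu3r mulrC mulKf ?dR_neq0 //.
exact: conjZK_inZK conjZK_expu3r_div.
Qed.

(* The norm 2 - (u^j + u^-j) of u^j - 1 lies strictly between -d^2 and 0. *)
Lemma not_congZK_expu_le2r j : (0 < j <= 2 * r)%N -> ~ congZK d (u ^+ j) 1.
Proof.
move=> /andP[j0 j2r] /(inZK_div_norm D2 sqf _ (conjZK_sub (conjZK_expu j) conjZK1)) [].
  by have := dR_neq0; rewrite intr_eq0.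
move=> k ek.
set X := u ^+ j in ek.
have X1 : 1 < X by rewrite exprn_egt1 -?lt0n.
have normX : (X - 1) * (X^-1 - 1) = 2 - (X + X^-1).
  transitivity (X * X^-1 + 1 - (X + X^-1)); first by ring.
  by rewrite expu_mulV.
have XW : X + X^-1 <= W ^+ 2 + W ^- 2.
  by apply: ler_add_inv; [exact: ltW | rewrite /X -exprM ler_eXn2l // mulnC].
have W0 : 0 < W by rewrite exprn_gt0 // (lt_trans ltr01 u1).
have Wi0 : 0 < W^-1 by rewrite invr_gt0.
have eW : W ^+ 2 + W ^- 2 < dR ^+ 2 by rewrite hd -exprVn; nra.
have := add_inv_gt2 X1.
rewrite normX in ek; move: ek eW XW; set E := dR ^+ 2 => ek eW XW X2.
have : 0 < (k + 1)%:~R :> R by rewrite rmorphD /=; nra.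
have : k%:~R < 0 :> R by nra.
rewrite ltrz0 ltr0z; lia.
Qed.

Lemma not_congZK_expu_lt3r j : (0 < j < 3 * r)%N -> ~ congZK d (u ^+ j) 1.
Proof.
move=> /andP[j0 j3r] hj.
have [j2r | j2r] := leqP j (2 * r); first by apply: (not_congZK_expu_le2r _ hj); rewrite j0.
have := congZK_expuB (ltnW j3r) congZK_expu3r hj.
by apply: not_congZK_expu_le2r; lia.
Qed.

Lemma mod_order_d : mod_order D u d (3 * r).
Proof.
split; first by rewrite muln_gt0.
split; first exact: congZK_expu3r.
by move=> j j0 j3r; apply: not_congZK_expu_lt3r; rewrite j0.
Qed.

Lemma congZK_expu6r (f : int) : d = 2 * f -> congZK (2 * d) (u ^+ (6 * r)) 1.
Proof.
move=> df; rewrite /congZK.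
have -> : (u ^+ (6 * r) - 1) / (2 * d)%:~R = W * (W - 1) * (f%:~R * (W * (W - 1)) + 1).
  have ef : dR = 2 * f%:~R by rewrite df rmorphM /= rmorph_nat.
  have f0 : f%:~R != 0 :> R by have := dR_neq0; rewrite ef mulf_eq0 negb_or => /andP[].
  have -> : (6 * r = 3 * r * 2)%N by rewrite mulnAC.
  rewrite exprM -(subrK 1 (u ^+ (3 * r))) expu3r rmorphM /= ef rmorph_nat.
  by field.
apply: conjZK_inZK (conjZK_mul conjZK_expu3r_div (conjZK_add _ conjZK1)).
exact: conjZK_mul (conjZK_int f) conjZK_expu3r_div.
Qed.

(* The norm of u^r - 1 is 3 - d, which is odd, so (u^r - 1) / 2 is not integral. *)
Lemma not_congZK_expu3r (f : int) : d = 2 * f -> ~ congZK (2 * d) (u ^+ (3 * r)) 1.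
Proof.
move=> df h.
have : inZK D ((W - 1) / 2%:~R).
  have := inZK_mul D2 sqf (conjZK_inZK (conjZK_sym (conjZK_expu r))) h.
  congr inZK; rewrite expu3r rmorphM /= rmorph_nat.
  by field; rewrite dR_neq0 expf_neq0 // unit_neq0.
move=> /(inZK_div_norm D2 sqf _ (conjZK_sub (conjZK_expu r) conjZK1)) [] // k ek.
have : 3 - d = k * 4 :> int.
  apply: (@intr_inj R).
  have -> : (k * 4)%:~R = k%:~R * 2%:~R ^+ 2 :> R by rewrite rmorphM /= !rmorph_nat; ring.
  rewrite -ek rmorphB /= rmorph_nat hd.
  transitivity (W * W^-1 + 1 - W - W^-1); first by rewrite expu_mulV; ring.
  by ring.
by rewrite df; lia.
Qed.

Lemma mod_order_2d : ~~ odd `|d|%N -> mod_order D u (2 * d) (6 * r).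
Proof.
move=> d_even.
have [f df] : exists f, d = 2 * f.
  have /dvdzP [f ->] : (2 %| d)%Z by rewrite dvdzE /= dvdn2.
  by exists f; rewrite mulrC.
split; first by rewrite muln_gt0.
split; first exact: congZK_expu6r df.
move=> j j0 j6r hj.
have hj' : congZK d (u ^+ j) 1 := congZK_dvd D2 sqf (isT : 2 != 0 :> int) hj.
have [j3r | j3r | j3r] := ltngtP j (3 * r).
- by apply: (not_congZK_expu_lt3r _ hj'); rewrite j0.
- have := congZK_expuB (ltnW j3r) hj' congZK_expu3r.
  by apply: not_congZK_expu_lt3r; lia.
- by apply: (not_congZK_expu3r df); rewrite -j3r.
Qed.

End UnitOrder.

Unset Implicit Arguments.

Theorem mainTheorem6 (R : rcfType) (D : nat) (uD : R) (r : nat) (d : int) :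
  (2 <= D)%N -> squarefree D -> is_uD D uD -> (1 <= r)%N ->
  d%:~R = 1 + uD ^+ r + uD ^- r ->
  let d' := if odd `|d|%N then d else 2 * d in
  mod_order D uD d' (if odd `|d|%N then 3 * r else 6 * r)%N.
Proof.
move=> D2 sqf /(is_uD_conjZK D2 sqf) [hu u1] r1 hd d'.
by rewrite /d'; case: ifP => [_ | /negbT d_even]; [exact: mod_order_d | exact: mod_order_2d].
Qed.
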